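(* Let $G_i=(V_i,E_i)$ be a graph and $S_i\subseteq V_i$, $i\in\{1,2\}$, and let $k,k'$ be integers. If $S_1\times S_2$ is a $k$-daf set in $G_1\times G_2$ and $S_2$ is a defensive $k'$-alliance in $G_2$, then $S_1$ is a $(k-k')$-daf set in $G_1$.
   Context: All graphs are finite and simple. For a graph $G=(V,E)$, a set $S\subseteq V$ and $v\in V$, let $\delta_S(v)=|\{u\in S: uv\in E\}|$ and $\overline{S}=V\setminus S$. For an integer $k$, a non-empty set $S\subseteq V$ is a defensive $k$-alliance if $\delta_S(v)\ge \delta_{\overline S}(v)+k$ for every $v\in S$. A set $X\subseteq V$ is a defensive $k$-alliance free set ($k$-daf set) if no defensive $k$-alliance $S$ satisfies $S\subseteq X$. The Cartesian product $G_1\times G_2$ of $G_1=(V_1,E_1)$, $G_2=(V_2,E_2)$ has vertex set $V_1\times V_2$, with $(a,b)$ adjacent to $(c,d)$ iff either $a=c$ and $bd\in E_2$, or $b=d$ and $ac\in E_1$. *)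

From mathcomp Require Import all_boot all_order all_algebra.
Set Implicit Arguments. Unset Strict Implicit. Unset Printing Implicit Defensive.
Import GRing.Theory Num.Theory.

Definition simple_graph (T : finType) (e : rel T) : Prop :=
  symmetric e /\ irreflexive e.

Definition deg_in (T : finType) (e : rel T) (S : {set T}) (v : T) : nat :=
  #|[set u in S | e u v]|.

Definition def_alliance (T : finType) (e : rel T) (k : int) (S : {set T}) : Prop :=
  S != set0 /\
  forall v, v \in S -> ((deg_in e (~: S) v)%:Z + k <= (deg_in e S v)%:Z)%R.

Definition daf (T : finType) (e : rel T) (k : int) (X : {set T}) : Prop :=
  forall S : {set T}, S \subset X -> ~ def_alliance e k S.

Definition cart_rel (T1 T2 : finType) (e1 : rel T1) (e2 : rel T2) : rel (T1 * T2) :=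
  fun x y => ((x.1 == y.1) && e2 x.2 y.2) || ((x.2 == y.2) && e1 x.1 y.1).

From mathcomp Require Import all_boot all_order all_algebra.
Import GRing.Theory Num.Theory.

(* In the Cartesian product G1 x G2 the neighbours of (a, b)
   are the vertices (a, u2) with u2 ~ b and (u1, b) with u1 ~ a, so the
   number of neighbours of (a, b) inside any X splits as the degree of b
   into the row of X at a plus the degree of a into the column of X at b
   (lemma deg_in_cart; only the looplessness of G2 is needed for this).
   For a rectangle A x B with a in A and b in B these rows and columns are
   B and A, and those of its complement are ~: B and ~: A.  Adding the two alliance inequalities then shows that A x B is a
   defensive (k + k')-alliance whenever A is a defensive k-alliance and B a
   defensive k'-alliance (lemma def_alliance_setX).  The theorem follows:
   a defensive (k - k')-alliance S inside S1 would give the defensive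
   k-alliance S x S2 inside S1 x S2. *)

Section CartesianDegree.

Variables (T1 T2 : finType) (e1 : rel T1) (e2 : rel T2).
Hypothesis irr2 : irreflexive e2.

Definition row_at (X : {set T1 * T2}) (a : T1) : {set T2} := [set u | (a, u) \in X].
Definition col_at (X : {set T1 * T2}) (b : T2) : {set T1} := [set u | (u, b) \in X].

(* Neighbours of (a, b) in X are either in its row (same first coordinate)
   or in its column (same second coordinate), and never in both since G2
   has no loops. *)
Lemma deg_in_cart (X : {set T1 * T2}) (a : T1) (b : T2) :
  deg_in (cart_rel e1 e2) X (a, b) =
  (deg_in e2 (row_at X a) b + deg_in e1 (col_at X b) a)%N.
Proof.
rewrite /deg_in.
set R := [set u in row_at X a | e2 u b]; set C := [set u in col_at X b | e1 u a].
have inj_row : injective (fun u2 : T2 => (a, u2)) by move=> x y [].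
have inj_col : injective (fun u1 : T1 => (u1, b)) by move=> x y [].
have split_nbhd : [set u in X | cart_rel e1 e2 u (a, b)] =
    (fun u2 => (a, u2)) @: R :|: (fun u1 => (u1, b)) @: C.
  apply/setP => -[u1 u2]; rewrite !inE /cart_rel /=; apply/andP/orP.
  - case=> Xu /orP [/andP [/eqP Ea Eu]|/andP [/eqP Eb Eu]]; subst.
      by left; apply/imsetP; exists u2; rewrite // !inE Xu.
    by right; apply/imsetP; exists u1; rewrite // !inE Xu.
  - by case=> /imsetP [y]; rewrite !inE => /andP [Xy Ey] [-> ->];
      rewrite Xy eqxx Ey ?orbT.
have disjoint_parts : (fun u2 => (a, u2)) @: R :&: (fun u1 => (u1, b)) @: C = set0.
  apply/setP => -[u1 u2]; rewrite !inE; apply/negbTE/andP.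
  case=> /imsetP [y]; rewrite inE => /andP [_ Ey] [_ ->].
  by case/imsetP=> z _ [_ Eb]; rewrite -Eb irr2 in Ey.
by rewrite split_nbhd cardsU disjoint_parts cards0 subn0 !card_imset.
Qed.

Lemma row_setX (A : {set T1}) (B : {set T2}) a : a \in A -> row_at (setX A B) a = B.
Proof. by move=> Aa; apply/setP => u; rewrite !inE Aa. Qed.

Lemma col_setX (A : {set T1}) (B : {set T2}) b : b \in B -> col_at (setX A B) b = A.
Proof. by move=> Bb; apply/setP => u; rewrite !inE Bb andbT. Qed.

Lemma row_setCX (A : {set T1}) (B : {set T2}) a :
  a \in A -> row_at (~: setX A B) a = ~: B.
Proof. by move=> Aa; apply/setP => u; rewrite !inE Aa. Qed.

Lemma col_setCX (A : {set T1}) (B : {set T2}) b :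
  b \in B -> col_at (~: setX A B) b = ~: A.
Proof. by move=> Bb; apply/setP => u; rewrite !inE Bb andbT. Qed.

Lemma def_alliance_setX (k k' : int) (A : {set T1}) (B : {set T2}) :
  def_alliance e1 k A -> def_alliance e2 k' B ->
  def_alliance (cart_rel e1 e2) (k + k') (setX A B).
Proof.
move=> [/set0Pn [a0 Aa0] allyA] [/set0Pn [b0 Bb0] allyB]; split.
  by apply/set0Pn; exists (a0, b0); rewrite inE Aa0 Bb0.
move=> [a b]; rewrite inE /= => /andP [Aa Bb].
rewrite !deg_in_cart row_setX // col_setX // row_setCX // col_setCX // !PoszD.
by rewrite (addrC k) addrACA lerD ?allyA ?allyB.
Qed.

End CartesianDegree.

Theorem theorem2 (T1 T2 : finType) (e1 : rel T1) (e2 : rel T2)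
  (S1 : {set T1}) (S2 : {set T2}) (k k' : int) :
  simple_graph e1 -> simple_graph e2 ->
  daf (cart_rel e1 e2) k (setX S1 S2) ->
  def_alliance e2 k' S2 ->
  daf e1 (k - k')%R S1.
Proof.
move=> _ [_ irr2] dafX allyS2 S subS allyS.
apply: (dafX (setX S S2)).
  by apply/subsetP => -[x y]; rewrite !inE => /andP [/(subsetP subS) -> ->].
by rewrite -[k](subrK k'); apply: def_alliance_setX.
Qed.
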